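(* Let $k$ and $M$ be positive integers, and let $M=p_{1}^{e_{1}}p_{2}^{e_{2}}\cdots p_{l}^{e_{l}}$ be the prime factorization of $M$, where $p_1,\dots,p_l$ are distinct primes. For any integer $n\geq \max\{e_j\mid 1\le j\le l\}$, \[ \sum_{i=0}^{\varphi(M)-1}B^{(-k)}_{n+i}\equiv \sum_{i=0}^{\varphi(M)-1}B^{(-n-i)}_{k}\equiv 0\pmod{M}. \]
   Context: For any integer $k$, let $\mathrm{Li}_k(t)=\sum_{n=1}^{\infty} t^n/n^k$. The poly-Bernoulli numbers $B^{(k)}_n$ ($n\ge 0$) are defined by $\frac{\mathrm{Li}_k(1-e^{-t})}{1-e^{-t}}=\sum_{n=0}^{\infty}B^{(k)}_n\frac{t^n}{n!}$. For negative upper index these are integers. $\varphi$ denotes Euler's totient function. *)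

From mathcomp Require Import all_boot all_order all_algebra.
Set Implicit Arguments. Unset Strict Implicit. Unset Printing Implicit Defensive.
Import Order.TTheory GRing.Theory Num.Theory.
Local Open Scope ring_scope.

Definition one_minus_exp_neg_trunc (N : nat) : {poly rat} :=
  \sum_(1 <= i < N.+1) ((-1) ^+ i.+1 / (i`!)%:R) *: 'X^i.

(* Li_{-k}(x)/x = sum_{m>=0} (m+1)^k x^m  (formal power series in x).
   Since x = 1 - e^{-t} has zero constant term, the coefficient of t^n of
   Li_{-k}(1-e^{-t})/(1-e^{-t}) only involves the terms m <= n and the
   truncation of 1 - e^{-t} at degree n.  Hence
   polyBneg k n = B_n^{(-k)} = n! * [t^n] Li_{-k}(1-e^{-t})/(1-e^{-t}). *)
Definition polyBneg (k n : nat) : rat :=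
  (n`!)%:R *
  (\sum_(0 <= m < n.+1) ((m.+1 ^ k)%:R) *: (one_minus_exp_neg_trunc n) ^+ m)`_n.

From mathcomp Require Import all_boot all_order all_algebra.
From mathcomp Require Import cyclic zify ring.
Set Implicit Arguments. Unset Strict Implicit. Unset Printing Implicit Defensive.
Import GRing.Theory Num.Theory.

(* Write B_k^{(-n)} = \sum_{m <= k} (-1)^(m+k) m! S(k, m) (m+1)^n, with S the Stirling numbers
   of the second kind.  The second sum is then \sum_m (-1)^(m+k) m! S(k, m) \sum_{i < phi(M)}
   (m+1)^(n+i); its m = 0 term vanishes as k > 0, and for m > 0 each prime power p^e exactly
   dividing M divides m! \sum_i (m+1)^(n+i): if p | m+1, then p^e | (m+1)^n as e <= n; if p | m,
   then p | m! and p^(e-1) divides the geometric sum, whose ratio is 1 mod p and whose number of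
   terms is a multiple of p^(e-1); otherwise m \sum_{i < phi(M)} (m+1)^i = (m+1)^phi(M) - 1 is
   0 mod p^e by Euler's theorem.  The first sum is equal to the second by the duality
   B_n^{(-k)} = B_k^{(-n)}, a consequence of B_n^{(-k)} = \sum_j j!^2 S(n+1, j+1) S(k+1, j+1). *)

Lemma geom_sum_mul a x y :
  \sum_(i < x * y) a ^ i = (\sum_(i < x) a ^ i) * \sum_(r < y) (a ^ x) ^ r.
Proof.
elim: y => [|y IHy]; first by rewrite muln0 !big_ord0 muln0.
rewrite mulnS addnC big_split_ord IHy big_ord_recr /= mulnDr; congr (_ + _).
by rewrite big_distrl; apply: eq_bigr => i _; rewrite -expnM expnD mulnC.
Qed.

Lemma dvdn_geom_sum p a j T :
  a = 1 %[mod p] -> p ^ j %| T -> p ^ j %| \sum_(i < T) a ^ i.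
Proof.
move=> a1 /dvdnP[c ->]; rewrite mulnC geom_sum_mul dvdn_mulr //.
elim: j => [|j IHj]; first by rewrite big_ord1.
rewrite expnSr geom_sum_mul dvdn_mul //.
have apj1 : a ^ p ^ j = 1 %[mod p] by rewrite -modnXm a1 modnXm exp1n.
rewrite /dvdn -modn_summ; under eq_bigr do rewrite -modnXm apj1 modnXm exp1n.
by rewrite sum_nat_const card_ord modnMr.
Qed.

Lemma pfactor_dvdn_fact_sum_pow p e m n T :
  prime p -> 0 < m -> e <= n -> totient (p ^ e) %| T ->
  p ^ e %| m`! * \sum_(i < T) m.+1 ^ (n + i).
Proof.
move=> p_pr m_gt0 le_en phi_dvdT.
have sumE : \sum_(i < T) m.+1 ^ (n + i) = m.+1 ^ n * \sum_(i < T) m.+1 ^ i.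
  by rewrite big_distrr; apply: eq_bigr => i _; rewrite expnD.
have [->|e_gt0] := posnP e; first by rewrite dvd1n.
rewrite sumE; have [p_dvd_m1|p_ndvd_m1] := boolP (p %| m.+1).
  by rewrite mulnCA dvdn_mulr // (dvdn_trans (dvdn_exp2l p le_en)) ?dvdn_exp2r.
have [p_dvd_m|p_ndvd_m] := boolP (p %| m).
  rewrite -(prednK e_gt0) expnS dvdn_mul //.
    by apply: dvdn_trans p_dvd_m _; rewrite dvdn_fact // m_gt0 /=.
  rewrite dvdn_mull // dvdn_geom_sum //.
    by rewrite -addn1 -modnDml (eqP p_dvd_m).
  by rewrite (dvdn_trans _ phi_dvdT) // totient_pfactor // dvdn_mull.
have m1_coprime : coprime m.+1 (p ^ e).
  by rewrite coprime_sym coprime_pexpl // prime_coprime.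
have m_dvd_fact : m %| m`! by rewrite dvdn_fact // m_gt0 /=.
rewrite mulnCA dvdn_mull //; apply: dvdn_trans (dvdn_mul m_dvd_fact (dvdnn _)).
have [c ->] := dvdnP phi_dvdT.
rewrite -(predn_exp m.+1) -subn1 -eqn_mod_dvd ?expn_gt0 // eq_sym expnM.
by rewrite expnAC -modnXm (Euler_exp_totient m1_coprime) modnXm exp1n.
Qed.

Lemma totient_pfactor_dvdn M p :
  0 < M -> p \in primes M -> totient (p ^ logn p M) %| totient M.
Proof.
move=> M_gt0 p_M; have p_pr : prime p by move: p_M; rewrite mem_primes => /andP[].
by rewrite totient_pfactor ?logn_gt0 // totientE // (big_rem p) //= dvdn_mulr.
Qed.

Lemma dvdn_fact_sum_pow M m n : 0 < M -> 0 < m ->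
  (forall p, p \in primes M -> logn p M <= n) ->
  M %| m`! * \sum_(i < totient M) m.+1 ^ (n + i).
Proof.
move=> M_gt0 m_gt0 le_logn; apply/(dvdn_partP _ M_gt0) => p p_M; rewrite p_part.
have p_pr : prime p by move: p_M; rewrite mem_primes => /andP[].
by apply: pfactor_dvdn_fact_sum_pow; rewrite ?le_logn ?totient_pfactor_dvdn.
Qed.

Local Open Scope ring_scope.

Lemma big_ord_widen0 (V : nmodType) n1 n2 (F : nat -> V) : (n1 <= n2)%N ->
  (forall i, (n1 <= i < n2)%N -> F i = 0) -> \sum_(i < n1) F i = \sum_(i < n2) F i.
Proof.
move=> le12 F0; rewrite (big_ord_widen _ _ le12) big_mkcond; apply: eq_bigr => i _.
by case: ltnP => // le1i; rewrite F0 // le1i /=.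
Qed.

Section BinomialTransform.
Variable R : comPzRingType.
Implicit Types (g h : nat -> R) (a c : R).

Definition bintrans g (j : nat) : R :=
  \sum_(l < j.+1) (-1) ^+ l * 'C(j, l)%:R * g l.

Lemma eq_bintrans g h j : g =1 h -> bintrans g j = bintrans h j.
Proof. by move=> gh; apply: eq_bigr => l _; rewrite gh. Qed.

Lemma bintransD g h j : bintrans (fun l => g l + h l) j = bintrans g j + bintrans h j.
Proof. by rewrite /bintrans -big_split; apply: eq_bigr => l _ /=; ring. Qed.

Lemma bintransB g h j : bintrans (fun l => g l - h l) j = bintrans g j - bintrans h j.
Proof. by rewrite /bintrans -sumrB; apply: eq_bigr => l _; ring. Qed.

Lemma bintransZ a g j : bintrans (fun l => a * g l) j = a * bintrans g j.
Proof. by rewrite /bintrans mulr_sumr; apply: eq_bigr => l _; ring. Qed.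

Lemma bintrans0 g : bintrans g 0 = g 0%N.
Proof. by rewrite /bintrans big_ord1 expr0 bin0 !mul1r. Qed.

Lemma bintransS g j : bintrans g j.+1 = bintrans g j - bintrans (fun l => g l.+1) j.
Proof.
rewrite /bintrans big_ord_recl [in X in _ = X - _]big_ord_recl.
under eq_bigr => i _ do rewrite lift0 binS natrD mulrDr mulrDl.
rewrite big_split big_ord_recr /= (bin_small (ltnSn j)) mulr0 mul0r addr0 addrA -sumrN.
congr (_ + _ + _); first by rewrite !bin0.
by apply: eq_bigr => i _; rewrite exprS; ring.
Qed.

Lemma bintrans_cst c j : bintrans (fun=> c) j = c * (j == 0)%:R.
Proof. by elim: j => [|j IHj]; rewrite ?bintrans0 ?mulr1 // bintransS IHj subrr mulr0. Qed.

Lemma bintrans_natM g j :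
  bintrans (fun l => l%:R * g l) j.+1 = - j.+1%:R * bintrans (fun l => g l.+1) j.
Proof.
rewrite /bintrans big_ord_recl mul0r mulr0 add0r mulr_sumr; apply: eq_bigr => i _.
have e : i.+1%:R * 'C(j.+1, i.+1)%:R = j.+1%:R * 'C(j, i)%:R :> R.
  by rewrite -!natrM -mul_bin_diag.
rewrite lift0 exprS; transitivity (- ((-1) ^+ i * (i.+1%:R * 'C(j.+1, i.+1)%:R) * g i.+1)).
  by ring.
by rewrite e; ring.
Qed.

Lemma bintransK g : bintrans (bintrans g) =1 g.
Proof.
move=> m; elim: m g => [|m IHm] g; first by rewrite !bintrans0.
rewrite bintransS [X in _ - X](eq_bintrans _ (fun l => bintransS g l)).
by rewrite bintransB !IHm subKr.
Qed.

End BinomialTransform.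

Lemma rmorph_bintrans (R S : comPzRingType) (f : {rmorphism R -> S}) g j :
  f (bintrans g j) = bintrans (f \o g) j.
Proof.
rewrite rmorph_sum; apply: eq_bigr => l _.
by rewrite !rmorphM rmorph_sign rmorph_nat.
Qed.

(* [signed_surj m N = (-1)^(m+N) m! S(N, m)]. *)
Definition signed_surj (m N : nat) : int := bintrans (fun l => (- l%:R) ^+ N) m.

Lemma signed_surjSS m N :
  signed_surj m.+1 N.+1 = m.+1%:R * (signed_surj m N - signed_surj m.+1 N).
Proof.
rewrite /signed_surj (@eq_bintrans _ _ (fun l => l%:R * (-1 * (- l%:R) ^+ N))).
  by rewrite bintrans_natM bintransZ [X in _ - X]bintransS; ring.
by move=> l; rewrite exprSr; ring.
Qed.

Lemma signed_surjn0 m : signed_surj m 0 = (m == 0%N)%:R.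
Proof. by rewrite /signed_surj (@eq_bintrans _ _ (fun=> 1)) // bintrans_cst mul1r. Qed.

Lemma signed_surj0n N : signed_surj 0 N = (N == 0%N)%:R.
Proof. by rewrite /signed_surj bintrans0 oppr0 expr0n. Qed.

Lemma signed_surj_small m N : (N < m)%N -> signed_surj m N = 0.
Proof.
elim: N m => [|N IHN] [|m] // ltNm; first by rewrite signed_surjn0.
by rewrite signed_surjSS !IHN ?subrr ?mulr0 // ltnW.
Qed.

Lemma dvdz_fact_signed_surj m N : (m`!%:Z %| signed_surj m N)%Z.
Proof.
elim: N m => [|N IHN] [|m]; rewrite ?signed_surjn0 ?signed_surj0n ?dvdz0 //.
rewrite signed_surjSS factS PoszM natz; apply: dvdz_mul => //; apply: rpredB => //.
by apply: dvdz_trans (IHN m.+1); rewrite factS PoszM dvdz_mull.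
Qed.

(* [fact_stirling j N = j! S(N+1, j+1)]. *)
Definition fact_stirling (j N : nat) : int :=
  (-1) ^+ j * bintrans (fun l => l.+1%:R ^+ N) j.

Lemma fact_stirling0n N : fact_stirling 0 N = 1.
Proof. by rewrite /fact_stirling bintrans0 expr1n mulr1. Qed.

Lemma fact_stirlingSS j N :
  fact_stirling j.+1 N.+1 = j.+2%:R * fact_stirling j.+1 N + j.+1%:R * fact_stirling j N.
Proof.
pose h l : int := l.+1%:R ^+ N.
have hS : bintrans (fun l => h l.+1) j = bintrans h j - bintrans h j.+1.
  by rewrite bintransS opprB addrC subrK.
rewrite /fact_stirling (@eq_bintrans _ _ (fun l => h l + l%:R * h l)).
  by rewrite bintransD bintrans_natM hS -!natr1 !exprS; ring.
by move=> l; rewrite /h exprS -natr1; ring.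
Qed.

Lemma sum_signed_surjS (c : nat -> int) N :
  \sum_(m < N.+2) c m * signed_surj m N.+1 =
  \sum_(m < N.+1) (c m.+1 * m.+1%:R - c m * m%:R) * signed_surj m N.
Proof.
have shift : \sum_(m < N.+1) c m.+1 * (m.+1%:R * signed_surj m.+1 N) =
             \sum_(m < N.+1) c m * (m%:R * signed_surj m N).
  rewrite big_ord_recr /= (signed_surj_small (ltnSn N)) !mulr0 addr0.
  by rewrite [RHS]big_ord_recl mul0r mulr0 add0r.
rewrite big_ord_recl signed_surj0n mulr0 add0r.
under eq_bigr => m _ do rewrite lift0 signed_surjSS mulrBr mulrBr.
by rewrite sumrB shift -sumrB; apply: eq_bigr => m _; ring.
Qed.

Lemma mul_binSS m j :
  (m.+1 * 'C(m.+1, j.+1) = m * 'C(m, j.+1) + j.+2 * 'C(m, j.+1) + j.+1 * 'C(m, j))%N.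
Proof.
have diag : (m.+1 * 'C(m, j) = j.+1 * 'C(m.+1, j.+1))%N := mul_bin_diag m.+1 j.
by rewrite binS mulnDr diag binS; lia.
Qed.

Lemma sum_bin_signed_surj j N :
  \sum_(m < N.+1) 'C(m, j)%:R * signed_surj m N = fact_stirling j N.
Proof.
elim: N j => [|N IHN] j.
  rewrite big_ord1 signed_surjn0 mulr1 /fact_stirling.
  rewrite (eq_bintrans _ (fun l => expr0 (l.+1%:R : int))) bintrans_cst mul1r bin0n.
  by case: j => [|j]; rewrite ?mulr0.
rewrite (sum_signed_surjS (fun m => 'C(m, j)%:R)); case: j => [|j].
  transitivity (fact_stirling 0 N); last by rewrite !fact_stirling0n.
  rewrite -IHN.
  by apply: eq_bigr => m _; rewrite !bin0 -natr1; ring.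
rewrite fact_stirlingSS -!IHN !mulr_sumr -big_split; apply: eq_bigr => m _ /=.
have e : m.+1%:R * 'C(m.+1, j.+1)%:R =
         m%:R * 'C(m, j.+1)%:R + j.+2%:R * 'C(m, j.+1)%:R + j.+1%:R * 'C(m, j)%:R :> int.
  by rewrite -!natrM -!natrD mul_binSS.
transitivity ((m.+1%:R * 'C(m.+1, j.+1)%:R - m%:R * 'C(m, j.+1)%:R) * signed_surj m N).
  by ring.
by rewrite e; ring.
Qed.

Lemma fact_stirling_small j N : (N < j)%N -> fact_stirling j N = 0.
Proof.
move=> ltNj; rewrite -sum_bin_signed_surj big1 // => m _.
by rewrite bin_small ?mul0r // (leq_trans (ltn_ord m)).
Qed.

Lemma pow_succ_sum_bin_fact_stirling m K :
  m.+1%:R ^+ K = \sum_(j < m.+1) 'C(m, j)%:R * fact_stirling j K :> int.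
Proof.
rewrite -(bintransK (fun l => l.+1%:R ^+ K) m).
by apply: eq_bigr => j _; rewrite /fact_stirling; ring.
Qed.

Definition polyBnegz (k n : nat) : int :=
  \sum_(m < n.+1) signed_surj m n * m.+1%:R ^+ k.

Lemma polyBnegz_fact_stirling k n B : (n < B)%N ->
  polyBnegz k n = \sum_(j < B) fact_stirling j n * fact_stirling j k.
Proof.
move=> ltnB.
have pow_widen (m : 'I_n.+1) :
    m.+1%:R ^+ k = \sum_(j < B) 'C(m, j)%:R * fact_stirling j k :> int.
  rewrite pow_succ_sum_bin_fact_stirling.
  apply: (big_ord_widen0 (F := fun j => 'C(m, j)%:R * fact_stirling j k)).
    exact: leq_trans (ltn_ord m) ltnB.
  by move=> j /andP[ltmj _]; rewrite bin_small ?mul0r.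
rewrite /polyBnegz; under eq_bigr do rewrite pow_widen mulr_sumr.
rewrite exchange_big; apply: eq_bigr => j _ /=.
by rewrite -(sum_bin_signed_surj j n) mulr_suml; apply: eq_bigr => m _; ring.
Qed.

Lemma polyBnegzC k n : polyBnegz k n = polyBnegz n k.
Proof.
rewrite !(@polyBnegz_fact_stirling _ _ (k + n).+1) ?ltnS ?leq_addl ?leq_addr //.
by apply: eq_bigr => j _; rewrite mulrC.
Qed.

Definition exp_neg_trunc (N : nat) : {poly rat} := \poly_(i < N.+1) ((-1) ^+ i / i`!%:R).

Lemma one_minus_exp_neg_truncE N : one_minus_exp_neg_trunc N = 1 - exp_neg_trunc N.
Proof.
rewrite /one_minus_exp_neg_trunc big_add1 big_mkord /exp_neg_trunc poly_def big_ord_recl.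
rewrite !expr0 fact0 divr1 scale1r opprD addNKr -sumrN /=.
by apply: eq_bigr => i _; rewrite exprS mulN1r mulNr scaleNr.
Qed.

Lemma natr_fact_neq0 (R : numDomainType) n : n`!%:R != 0 :> R.
Proof. by rewrite pnatr_eq0 -lt0n fact_gt0. Qed.

Lemma coef_exp_neg_trunc_pow N l j : (j <= N)%N ->
  (exp_neg_trunc N ^+ l)`_j = (- l%:R) ^+ j / j`!%:R.
Proof.
elim: l j => [|l IHl] j leqjN.
  by rewrite expr0 coef1 oppr0 expr0n; case: j {leqjN} => [|j]; rewrite ?divr1 ?mul0r.
rewrite exprSr coefM -[l.+1]addn1 natrD opprD addrC exprDn mulr_suml.
apply: eq_bigr => i _; have leij : (i <= j)%N by rewrite -ltnS.
rewrite IHl ?(leq_trans leij) // coef_poly ltnS (leq_trans (leq_subr _ _) leqjN).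
have := bin_fact leij => /(congr1 (fun n => n%:R : rat)); rewrite !natrM => binE.
rewrite -binE -[_ *+ 'C(j, i)]mulr_natr.
by field; rewrite !natr_fact_neq0 pnatr_eq0 -lt0n bin_gt0 leij.
Qed.

Lemma fact_coef_one_minus_exp_neg_trunc_pow N m :
  N`!%:R * (one_minus_exp_neg_trunc N ^+ m)`_N = (signed_surj m N)%:~R.
Proof.
rewrite one_minus_exp_neg_truncE exprBn coef_sum mulr_sumr rmorph_bintrans.
apply: eq_bigr => l _ /=.
rewrite expr1n mulr1 coefMn -(rmorph_sign (@polyC rat)) coefCM coef_exp_neg_trunc_pow //.
rewrite rmorphXn rmorphN rmorph_nat -[_ *+ 'C(m, l)]mulr_natr.
by field; rewrite natr_fact_neq0.
Qed.

Lemma polyBnegE k n : polyBneg k n = (polyBnegz k n)%:~R.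
Proof.
rewrite /polyBneg coef_sum big_mkord mulr_sumr /polyBnegz rmorph_sum.
apply: eq_bigr => m _; rewrite coefZ mulrCA fact_coef_one_minus_exp_neg_trunc_pow.
by rewrite rmorphM rmorphXn rmorph_nat natrX mulrC.
Qed.

Lemma dvdz_sum_polyBnegz k M n : (0 < k)%N -> (0 < M)%N ->
  (forall p, p \in primes M -> (logn p M <= n)%N) ->
  (M%:Z %| \sum_(i < totient M) polyBnegz (n + i) k)%Z.
Proof.
move=> k_gt0 M_gt0 le_logn.
rewrite /polyBnegz exchange_big; apply: rpred_sum => m _ /=; rewrite -mulr_sumr.
have [->|m_gt0] := posnP m; first by rewrite signed_surj0n gtn_eqF // mul0r dvdz0.
have [q ->] := dvdzP (dvdz_fact_signed_surj m k).
have sumE : \sum_(i < totient M) m.+1%:R ^+ (n + i) =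
            (\sum_(i < totient M) m.+1 ^ (n + i))%N%:R :> int.
  by rewrite natr_sum; apply: eq_bigr => i _; rewrite natrX.
rewrite -mulrA sumE dvdz_mull // dvdzE abszM natz !absz_nat.
exact: dvdn_fact_sum_pow.
Qed.

Theorem corollary3p7 (k M n : nat) (hk : (0 < k)%N) (hM : (0 < M)%N)
  (hn : forall p : nat, p \in primes M -> (logn p M <= n)%N) :
  (exists z : int, \sum_(i < totient M) polyBneg k (n + i) = M%:R * z%:~R) /\
  (exists z : int, \sum_(i < totient M) polyBneg (n + i) k = M%:R * z%:~R).
Proof.
have [q sumE] := dvdzP (dvdz_sum_polyBnegz hk hM hn).
have castE : \sum_(i < totient M) (polyBnegz (n + i) k)%:~R = M%:R * q%:~R :> rat.
  by rewrite -rmorph_sum sumE rmorphM mulrC.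
split; exists q; rewrite -castE; apply: eq_bigr => i _; first by rewrite polyBnegE polyBnegzC.
exact: polyBnegE.
Qed.
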